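(* Let the number of buffer lanes satisfy $L>1$, the number of colors satisfy $C>1$, and the lane width satisfy $W>1$. Then for every $n\in\mathbb{N}$ there exists an upstream sequence of colors $c_1,\dots,c_N\in\{1,\dots,C\}$ such that the minimum number of color changes achievable under the ``store-then-retrieve'' regime is at least $n$ larger than the minimum number of color changes achievable under ``flexible storage and retrieval''.
   Context: Paint shop problem with a multi-lane buffer: an upstream sequence of $N$ cars with colors $c_1,\dots,c_N\in\{1,\dots,C\}$ is processed in order. The buffer consists of $L$ lanes, each a first-in-first-out queue of capacity $W$. At each step exactly one operation is performed: either a store operation, which removes the first remaining car of the upstream sequence and appends it to the back of a lane that is not full; or a retrieve operation, which removes the front car of a nonempty lane and appends it to the end of the downstream sequence. The process ends when the upstream sequence and the buffer are both empty, so the downstream sequence is a permutation of the $N$ cars. The number of color changes of a solution is the number of indices $k$ with $1\le k<N$ such that the $k$-th and $(k+1)$-st cars of the downstream sequence have different colors. Under ``flexible storage and retrieval'', store and retrieve operations may be performed in any order (whenever valid). Under ``store-then-retrieve'', starting from an empty buffer the operations alternate in phases: a storage phase in which cars are stored until the buffer is completely full (or the upstream sequence is exhausted), followed by a retrieval phase in which cars are retrieved until the buffer is completely empty; these phases repeat until all cars have been processed. In each regime, the minimum is taken over all valid operation sequences obeying that regime. *)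

From mathcomp Require Import all_boot.
Set Implicit Arguments. Unset Strict Implicit. Unset Printing Implicit Defensive.

(* Cars are represented by their colors (natural numbers); only colors matter
   for counting color changes. *)

(* Buffer operations; the nat argument is the lane index (0 <= i < L). *)
Inductive op := Store of nat | Retrieve of nat.

(* State: remaining upstream sequence, the lanes (front of each FIFO lane is
   the head of the list), downstream sequence produced so far. *)
Record state := mkState { upstream : seq nat; lanes : seq (seq nat); downstream : seq nat }.

Definition init_state (L : nat) (cs : seq nat) : state :=
  mkState cs (nseq L [::]) [::].

Definition step (L W : nat) (o : op) (s : state) : option state :=
  match o with
  | Store i =>
      match upstream s with
      | [::] => None
      | c :: u =>
          if (i < L) && (size (nth [::] (lanes s) i) < W) then
            Some (mkState u (set_nth [::] (lanes s) i (rcons (nth [::] (lanes s) i) c))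
                          (downstream s))
          else None
      end
  | Retrieve i =>
      if i < L then
        match nth [::] (lanes s) i with
        | [::] => None
        | c :: rest =>
            Some (mkState (upstream s) (set_nth [::] (lanes s) i rest)
                          (rcons (downstream s) c))
        end
      else None
  end.

Fixpoint run (L W : nat) (ops : seq op) (s : state) : option state :=
  match ops with
  | [::] => Some s
  | o :: os => match step L W o s with
               | None => None
               | Some s' => run L W os s'
               end
  end.

Definition buffer_empty (s : state) : bool := all (fun l => l == [::]) (lanes s).
Definition buffer_full (W : nat) (s : state) : bool := all (fun l => size l == W) (lanes s).

Definition finished (s : state) : bool := (upstream s == [::]) && buffer_empty s.

Definition flex_solution (L W : nat) (cs : seq nat) (out : seq nat) : Prop :=
  exists ops, exists s, run L W ops (init_state L cs) = Some s /\ finished s /\ downstream s = out.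

(* Store-then-retrieve: a phase flag (true = storage phase, false = retrieval
   phase).  The storage phase ends as soon as the buffer is full
   or the upstream sequence is exhausted; the retrieval phase ends as soon as
   the buffer is empty. *)
Definition step_str (L W : nat) (o : op) (ps : bool * state) : option (bool * state) :=
  let: (storing, s) := ps in
  match o with
  | Store _ =>
      if storing then
        match step L W o s with
        | None => None
        | Some s' => Some (~~ (buffer_full W s' || (upstream s' == [::])), s')
        end
      else None
  | Retrieve _ =>
      if storing then None
      else
        match step L W o s with
        | None => None
        | Some s' => Some (buffer_empty s', s')
        end
  end.

Fixpoint run_str (L W : nat) (ops : seq op) (ps : bool * state) : option (bool * state) :=
  match ops with
  | [::] => Some ps
  | o :: os => match step_str L W o ps with
               | None => None
               | Some ps' => run_str L W os ps'
               end
  end.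

Definition str_solution (L W : nat) (cs : seq nat) (out : seq nat) : Prop :=
  exists ops, exists ps, run_str L W ops (true, init_state L cs) = Some ps
    /\ finished ps.2 /\ downstream ps.2 = out.

Definition color_changes (s : seq nat) : nat :=
  match s with
  | [::] => 0
  | _ :: t => count (fun p => p.1 != p.2) (zip s t)
  end.

Definition is_min_changes (sol : seq nat -> Prop) (k : nat) : Prop :=
  (exists out, sol out /\ color_changes out = k) /\
  (forall out, sol out -> k <= color_changes out).

(* Cut the upstream sequence into blocks of m = L W cars, each containing both
   colors: with a = m - 1, one period is 1^a 2 | 1 2^a | 2^a 1 | 2 1^a.  Under
   store-then-retrieve, every storage phase but the last stores exactly the next
   m cars and the following retrieval phase emits a permutation of them, so each
   block costs at least one color change: 4 per period.  With flexible operations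
   lane 0 passes cars straight through while lane 1 parks the lone 2 of 1^a 2 1
   (and the lone 1 of 2^(2a) 1 2) until the run around it has gone by; a period
   then leaves as 1^(a+1) 2^(2a+2) 1^(a+1), with 2 changes.  After n periods the
   gap is at least 2n. *)

From Stdlib Require Import Wf_nat Classical.
From mathcomp Require Import all_boot zify.
Set Implicit Arguments. Unset Strict Implicit. Unset Printing Implicit Defensive.

Arguments color_changes : simpl never.

Lemma last_nseq (T : Type) (x y : T) n : last x (nseq n.+1 y) = y.
Proof. by elim: n. Qed.

Lemma flatten_flatten_nseq (T : Type) n (ss : seq (seq T)) :
  flatten (flatten (nseq n ss)) = flatten (nseq n (flatten ss)).
Proof. by elim: n => //= n IH; rewrite flatten_cat IH. Qed.

Lemma size_flatten_nseq (T : Type) n (s : seq T) : size (flatten (nseq n s)) = n * size s.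
Proof. by elim: n => //= n IH; rewrite size_cat IH mulSn. Qed.

Lemma all_flatten_nseq (T : Type) (p : pred T) n s : all p s -> all p (flatten (nseq n s)).
Proof. by move=> ps; elim: n => //= n IH; rewrite all_cat ps. Qed.

Lemma all_set_nth (T : Type) (a : pred T) x0 s i y :
  i < size s -> all a s -> a y -> all a (set_nth x0 s i y).
Proof.
elim: s i => [|z s IH] [|i] //= i_lt /andP[az as_] ay; first by rewrite ay.
by rewrite az IH.
Qed.

Lemma perm_flatten_set_nth (T : eqType) (ss : seq (seq T)) i x :
  perm_eq (flatten (set_nth [::] ss i x) ++ nth [::] ss i) (flatten ss ++ x).
Proof.
elim: ss i => [|l ss IH] [|i] /=.
- by rewrite !cats0.
- by rewrite cats0; elim: i => [|i] /=; rewrite ?cats0.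
- by rewrite -!catA perm_catC -catA perm_catCA.
- by rewrite -!catA perm_cat2l.
Qed.

Lemma perm_constant (T : eqType) (s t : seq T) : perm_eq s t -> constant s = constant t.
Proof.
have constantE (u : seq T) x : x \in u -> constant u = all (pred1 x) u.
  case: u => // y u; rewrite inE /= => xyu; apply/idP/andP => [yu|[/eqP -> //]].
  by have /eqP -> : x == y by case/orP: xyu => // /(allP yu).
case: s => [|x s] st; first by rewrite (size0nil (esym (perm_size st))).
have xt : x \in t by rewrite -(perm_mem st) mem_head.
by rewrite (constantE _ x) ?mem_head // (constantE t x) // (perm_all _ st).
Qed.

Lemma color_changes_cons2 x y s :
  color_changes [:: x, y & s] = (x != y) + color_changes (y :: s).
Proof. by []. Qed.

Lemma color_changes_cat s t :
  color_changes (s ++ t) =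
  color_changes s + color_changes t + [&& s != [::], t != [::] & last 0 s != head 0 t].
Proof.
elim: s t => [|x [|y s] IH] [|z t] //=; rewrite ?cats0 ?addn0 //.
  by rewrite color_changes_cons2 addnC.
by rewrite !color_changes_cons2 -cat_cons IH /=; lia.
Qed.

Lemma color_changes_catl s t : color_changes s + color_changes t <= color_changes (s ++ t).
Proof. by rewrite color_changes_cat leq_addr. Qed.

Lemma color_changes_eq0 s : (color_changes s == 0) = constant s.
Proof.
elim: s => [|x [|y s] IH] //.
rewrite color_changes_cons2 addn_eq0 IH /= eqb0 negbK eq_sym.
by case: eqP => [->|].
Qed.

Lemma nonconstant_color_changes s : ~~ constant s <= color_changes s.
Proof. by rewrite -color_changes_eq0 -lt0n; case: (color_changes s). Qed.

Lemma color_changes_cons_nseq n x s :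
  color_changes (x :: nseq n x ++ s) = color_changes (x :: s).
Proof. by elim: n => // n IH; rewrite [x :: _]/= color_changes_cons2 eqxx. Qed.

Lemma color_changes_flatten_nseq n p :
  head 0 p = last 0 p -> color_changes (flatten (nseq n p)) = n * color_changes p.
Proof.
move=> p_cyclic; elim: n => [|n IH] //=.
rewrite color_changes_cat IH mulSn; case: n {IH} => [|n] /=; first by rewrite andbF addn0.
by case: p p_cyclic => [_ //|x p /= <-]; rewrite eqxx addn0.
Qed.

Lemma is_min_changes_exists (sol : seq nat -> Prop) out :
  sol out -> exists k, is_min_changes sol k.
Proof.
move=> sol_out; set P := fun k => exists out, sol out /\ color_changes out = k.
have [k [[Pk k_min] _]] : has_unique_least_element le P.
  apply: dec_inh_nat_subset_has_unique_least_element => [k|]; first exact: classic.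
  by exists (color_changes out), out.
by exists k; split => // out' sol_out'; apply/leP/k_min; exists out'.
Qed.

Definition buffered (s : state) : seq nat := flatten (lanes s).

Definition lanes_ok (L W : nat) (s : state) : bool :=
  (size (lanes s) == L) && all (fun l => size l <= W) (lanes s).

Lemma run_cat L W ops1 ops2 s :
  run L W (ops1 ++ ops2) s = if run L W ops1 s is Some s' then run L W ops2 s' else None.
Proof. by elim: ops1 s => [|o ops IH] s //=; case: (step L W o s). Qed.

Lemma run_str_cat L W ops1 ops2 ps :
  run_str L W (ops1 ++ ops2) ps =
  if run_str L W ops1 ps is Some ps' then run_str L W ops2 ps' else None.
Proof. by elim: ops1 ps => [|o ops IH] ps //=; case: (step_str L W o ps). Qed.

Lemma step_store L W i s s' : step L W (Store i) s = Some s' ->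
  exists c, [/\ upstream s = c :: upstream s',
    perm_eq (buffered s') (rcons (buffered s) c) & downstream s' = downstream s].
Proof.
case: s => [[|c u] ls d] //=; case: ifP => // _ [<-]; exists c; split => //.
rewrite /buffered /= -(perm_cat2r (nth [::] ls i)) (permPl (perm_flatten_set_nth _ _ _)).
by rewrite -!cats1 -!catA perm_cat2l perm_catC.
Qed.

Lemma step_retrieve L W i s s' : step L W (Retrieve i) s = Some s' ->
  exists c, [/\ upstream s' = upstream s,
    perm_eq (c :: buffered s') (buffered s) & downstream s' = rcons (downstream s) c].
Proof.
case: s => u ls d /=; case: ifP => // _; case ls_i: (nth [::] ls i) => [|c l] // [<-].
exists c; split => //; rewrite /buffered /= -(perm_cat2r l).
by rewrite -(permPr (perm_flatten_set_nth ls i l)) ls_i cat_cons -cat1s perm_catCA.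
Qed.

Lemma step_lanes_ok L W o s s' : step L W o s = Some s' -> lanes_ok L W s -> lanes_ok L W s'.
Proof.
case: s => u ls d + /andP[/= /eqP size_ls all_ls]; subst L; rewrite /lanes_ok.
case: o => i /=.
- case: u => // c u; case: ifP => // /andP[i_lt lane_i] [<-] /=.
  rewrite size_set_nth (maxn_idPr i_lt) eqxx /=.
  by apply: all_set_nth; rewrite ?size_rcons.
- case: ifP => // i_lt; case ls_i: (nth [::] ls i) => [|c l] // [<-] /=.
  rewrite size_set_nth (maxn_idPr i_lt) eqxx /=.
  by apply: all_set_nth => //; have := allP all_ls _ (mem_nth [::] i_lt); rewrite ls_i => /ltnW.
Qed.

Lemma buffer_emptyE s : buffer_empty s = (buffered s == [::]).
Proof. by rewrite /buffer_empty /buffered; elim: (lanes s) => //= l ls ->; case: l. Qed.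

Lemma size_buffered_le L W s : lanes_ok L W s -> size (buffered s) <= L * W.
Proof.
case/andP => /eqP <-; rewrite /buffered; elim: (lanes s) => //= l ls IH /andP[lW /IH].
by rewrite size_cat mulSn; lia.
Qed.

Lemma size_buffered_full L W s :
  lanes_ok L W s -> buffer_full W s -> size (buffered s) = L * W.
Proof.
case/andP => /eqP <- _; rewrite /buffered /buffer_full.
by elim: (lanes s) => //= l ls IH /andP[/eqP lW /IH]; rewrite size_cat mulSn lW => ->.
Qed.

Lemma exists_store L W s : lanes_ok L W s -> ~~ buffer_full W s -> upstream s != [::] ->
  exists i s', step L W (Store i) s = Some s'.
Proof.
case: s => [[|c u] ls d] //= /andP[/eqP size_ls all_ls] /allPn[l l_in lW] _.
have l_lt : size l < W by rewrite ltn_neqAle lW (allP all_ls).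
by exists (index l ls); rewrite /= nth_index // -size_ls index_mem l_in l_lt; eexists.
Qed.

Lemma exists_retrieve L W s : lanes_ok L W s -> ~~ buffer_empty s ->
  exists i s', step L W (Retrieve i) s = Some s'.
Proof.
case: s => u ls d /andP[/eqP size_ls _] /allPn[[|c l] //= l_in _].
by exists (index (c :: l) ls); rewrite /= -size_ls index_mem l_in nth_index //; eexists.
Qed.

(** * Store-then-retrieve: feasibility *)

Lemma store_phase L W s : lanes_ok L W s -> ~~ buffer_full W s -> upstream s != [::] ->
  exists ops s', [/\ run_str L W ops (true, s) = Some (false, s'), lanes_ok L W s',
    ~~ buffer_empty s' & size (upstream s') < size (upstream s)].
Proof.
have [n] := ubnP (size (upstream s)); elim: n s => // n IH s /ltnSE up_n ok not_full up_ne.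
have [i [s1 step_s]] := exists_store ok not_full up_ne.
have [c [up_s buf_s1 _]] := step_store step_s.
have ok1 := step_lanes_ok step_s ok.
have ne1 : ~~ buffer_empty s1 by rewrite buffer_emptyE -size_eq0 (perm_size buf_s1) size_rcons.
have up_lt : size (upstream s1) < size (upstream s) by rewrite up_s.
case stop: (buffer_full W s1 || (upstream s1 == [::])).
  by exists [:: Store i], s1; cbn [run_str step_str]; rewrite step_s stop.
move/negbT: stop; rewrite negb_or => /andP[not_full1 up_ne1].
have [ops [s' [run1 ok' ne' up']]] := IH s1 (leq_trans up_lt up_n) ok1 not_full1 up_ne1.
exists (Store i :: ops), s'; cbn [run_str step_str].
rewrite step_s (negbTE not_full1) (negbTE up_ne1) /=.
by split => //; apply: ltn_trans up' up_lt.
Qed.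

Lemma retrieve_phase L W s : lanes_ok L W s -> ~~ buffer_empty s ->
  exists ops s', [/\ run_str L W ops (false, s) = Some (true, s'), lanes_ok L W s',
    buffer_empty s' & upstream s' = upstream s].
Proof.
have [n] := ubnP (size (buffered s)); elim: n s => // n IH s /ltnSE buf_n ok ne.
have [i [s1 step_s]] := exists_retrieve ok ne.
have [c [up_s buf_s1 _]] := step_retrieve step_s.
have ok1 := step_lanes_ok step_s ok.
have buf_lt : size (buffered s1) < size (buffered s) by rewrite -(perm_size buf_s1).
case stop: (buffer_empty s1).
  by exists [:: Retrieve i], s1; cbn [run_str step_str]; rewrite step_s stop.
have [ops [s' [run1 ok' e' up']]] := IH s1 (leq_trans buf_lt buf_n) ok1 (negbT stop).
by exists (Retrieve i :: ops), s'; cbn [run_str step_str]; rewrite step_s stop up' up_s.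
Qed.

Lemma str_solution_exists L W cs : 0 < L -> 0 < W -> exists out, str_solution L W cs out.
Proof.
move=> L_gt0 W_gt0.
suff [ops [s' [run_s fin_s]]] : exists ops s',
    run_str L W ops (true, init_state L cs) = Some (true, s') /\ finished s'.
  by exists (downstream s'), ops, (true, s').
have ok0 : lanes_ok L W (init_state L cs) by rewrite /lanes_ok size_nseq eqxx all_nseq orbT.
have e0 : buffer_empty (init_state L cs) by rewrite /buffer_empty all_nseq orbT.
move: (init_state L cs) ok0 e0 => s.
have [n] := ubnP (size (upstream s)); elim: n s => // n IH s /ltnSE up_n ok e.
case up_s: (upstream s) => [|c u].
  by exists [::], s; rewrite /finished up_s e.
have not_full : ~~ buffer_full W s.
  apply: contraTN e => /(size_buffered_full ok); rewrite buffer_emptyE -size_eq0 => ->.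
  by rewrite -lt0n muln_gt0 L_gt0 W_gt0.
have up_ne : upstream s != [::] by rewrite up_s.
have [ops1 [s1 [run1 ok1 ne1 up1]]] := store_phase ok not_full up_ne.
have [ops2 [s2 [run2 ok2 e2 up2]]] := retrieve_phase ok1 ne1.
have up2_n : size (upstream s2) < n by rewrite up2; apply: leq_trans up1 up_n.
have [ops3 [s' [run3 fin']]] := IH s2 up2_n ok2 e2.
by exists (ops1 ++ ops2 ++ ops3), s'; rewrite run_str_cat run1 run_str_cat run2 run3.
Qed.

(** * Store-then-retrieve: one change per block *)

Definition block (m : nat) (cs : seq nat) (j : nat) : seq nat := take m (drop (j * m) cs).

Definition nonconstant_blocks (m : nat) (cs : seq nat) (J : nat) : nat :=
  count (fun j => ~~ constant (block m cs j)) (iota 0 J).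

Lemma nonconstant_blocksS m cs J :
  nonconstant_blocks m cs J.+1 = nonconstant_blocks m cs J + ~~ constant (block m cs J).
Proof. by rewrite /nonconstant_blocks -addn1 iotaD count_cat /= addn0. Qed.

Section StoreThenRetrieveLowerBound.

Variables (L W : nat) (cs : seq nat).
Local Notation m := (L * W).

(* In the j-th storage/retrieval cycle the buffer, together with the cars r
   already retrieved in that cycle, is a permutation of block j of cs. *)
Definition storing_state (j : nat) (s : state) : Prop :=
  [/\ nonconstant_blocks m cs j <= color_changes (downstream s),
      upstream s = drop (j * m + size (buffered s)) cs
    & perm_eq (buffered s) (take (size (buffered s)) (drop (j * m) cs))].

Definition retrieving_state (j : nat) (s : state) : Prop :=
  exists d r, [/\ downstream s = d ++ r, nonconstant_blocks m cs j <= color_changes d,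
    upstream s = drop (j.+1 * m) cs & perm_eq (r ++ buffered s) (block m cs j)].

Lemma storing_state_store j i s s' :
  storing_state j s -> step L W (Store i) s = Some s' -> storing_state j s'.
Proof.
case=> changes up_s buf_s /step_store [c [up_c buf_s' down_s']].
set k := size (buffered s) in up_s buf_s.
have size_s' : size (buffered s') = k.+1 by rewrite (perm_size buf_s') size_rcons.
have drop_k : drop k (drop (j * m) cs) = c :: upstream s'.
  by rewrite drop_drop addnC -up_s up_c.
split; first by rewrite down_s'.
  by rewrite size_s' addnS -add1n -drop_drop -up_s up_c /= drop0.
by rewrite size_s' -addn1 takeD drop_k (permPl buf_s') -cats1 /= take0 perm_cat2r.
Qed.

Lemma storing_state_stop j s : lanes_ok L W s -> storing_state j s ->
  buffer_full W s || (upstream s == [::]) -> retrieving_state j s.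
Proof.
move=> ok [changes up_s buf_s] stop; exists (downstream s), [::]; rewrite cats0.
set k := size (buffered s) in up_s buf_s stop.
have k_le : k <= m := size_buffered_le ok.
have full_or_short : k = m \/ size cs <= j * m + k.
  case/orP: stop => [/(size_buffered_full ok) | /eqP up_nil]; first by left.
  by right; rewrite -subn_eq0 -size_drop -up_s up_nil.
case: full_or_short => [k_eq | cs_short].
  by rewrite k_eq in up_s buf_s; split => //; rewrite up_s mulSn addnC.
have cs_short_next : size cs <= j.+1 * m.
  by rewrite mulSn addnC (leq_trans cs_short) ?leq_add2l.
split => //; first by rewrite up_s !drop_oversize.
rewrite take_oversize ?size_drop ?leq_subLR // in buf_s.
by rewrite /block take_oversize // size_drop leq_subLR (leq_trans cs_short) ?leq_add2l.
Qed.

Lemma retrieving_state_retrieve j i s s' :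
  retrieving_state j s -> step L W (Retrieve i) s = Some s' -> retrieving_state j s'.
Proof.
case=> d [r [down_s changes up_s buf_s]] /step_retrieve [c [up_s' buf_s' down_s']].
exists d, (rcons r c); split => //; first by rewrite down_s' down_s rcons_cat.
  by rewrite up_s'.
by rewrite cat_rcons -(permPr buf_s) perm_cat2l.
Qed.

Lemma retrieving_state_stop j s : retrieving_state j s -> buffer_empty s -> storing_state j.+1 s.
Proof.
case=> d [r [down_s changes up_s buf_s]]; rewrite buffer_emptyE => /eqP buf_nil.
rewrite buf_nil cats0 in buf_s; rewrite /storing_state buf_nil addn0 take0; split => //.
rewrite nonconstant_blocksS down_s -(perm_constant buf_s).
by apply: leq_trans (color_changes_catl d r); apply: leq_add changes (nonconstant_color_changes r).
Qed.

Definition str_invariant (ps : bool * state) : Prop :=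
  let: (storing, s) := ps in
  lanes_ok L W s /\ exists j, if storing then storing_state j s else retrieving_state j s.

Lemma step_str_invariant o ps ps' :
  str_invariant ps -> step_str L W o ps = Some ps' -> str_invariant ps'.
Proof.
case: ps => [[] s] [ok [j inv]]; case: o => i; cbn [step_str] => //;
  case step_s: step => [s'|] // [<-]; split; try exact: step_lanes_ok step_s ok.
- exists j; case: ifPn => [_|]; first exact: storing_state_store inv step_s.
  rewrite negbK; apply: storing_state_stop; first exact: step_lanes_ok step_s ok.
  exact: storing_state_store inv step_s.
- have inv' := retrieving_state_retrieve inv step_s.
  by case e: (buffer_empty s'); [exists j.+1; apply: retrieving_state_stop | exists j].
Qed.

Lemma run_str_invariant ops ps ps' :
  str_invariant ps -> run_str L W ops ps = Some ps' -> str_invariant ps'.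
Proof.
elim: ops ps => [|o ops IH] ps inv /=; first by case=> <-.
by case step_ps: (step_str L W o ps) => [ps1|] // /IH; apply; apply: step_str_invariant step_ps.
Qed.

Lemma str_solution_blocks out : str_solution L W cs out ->
  exists J, size cs <= J * m /\ nonconstant_blocks m cs J <= color_changes out.
Proof.
case=> ops [[storing s] [run_s [fin <-]]].
move: fin; rewrite /finished /= => /andP[/eqP up_nil e].
have buf0 : buffered (init_state L cs) = [::] by rewrite /buffered /=; elim: L.
have inv0 : str_invariant (true, init_state L cs).
  split; first by rewrite /lanes_ok size_nseq eqxx all_nseq orbT.
  by exists 0; rewrite /storing_state buf0 /= mul0n drop0 take0.
have [_ [j inv]] := run_str_invariant inv0 run_s; clear run_s.
have [J [changes up_J _]] : exists J, storing_state J s.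
  by case: storing inv => inv; [exists j | exists j.+1; apply: retrieving_state_stop].
exists J; split => //.
move: e up_J; rewrite buffer_emptyE up_nil => /eqP -> /(congr1 size).
by rewrite size_drop addn0 => /esym/eqP; rewrite subn_eq0.
Qed.

End StoreThenRetrieveLowerBound.

Lemma block_flatten m bs j :
  all (fun b => size b == m) bs -> block m (flatten bs) j = nth [::] bs j.
Proof.
rewrite /block; elim: bs j => [|b bs IH] [|j] //= /andP[/eqP size_b sizes].
  by rewrite mul0n drop0 take_size_cat.
by rewrite mulSn addnC -drop_drop drop_size_cat // IH.
Qed.

Lemma str_color_changes_ge L W bs out :
  all (fun b => size b == L * W) bs -> all (fun b => ~~ constant b) bs ->
  str_solution L W (flatten bs) out -> size bs <= color_changes out.
Proof.
move=> sizes nonconst /str_solution_blocks [J [size_J changes]]; apply: leq_trans changes.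
have size_bs : size (flatten bs) = size bs * (L * W).
  elim: bs sizes {nonconst size_J} => //= b bs IH /andP[/eqP size_b /IH size_bs].
  by rewrite size_cat size_b size_bs mulSn.
have J_ge : size bs <= J.
  rewrite size_bs in size_J; case: bs sizes nonconst size_J {size_bs} => [//|b bs].
  case/andP=> /eqP size_b _ /andP[nonconst_b _]; rewrite leq_pmul2r // -size_b lt0n size_eq0.
  by apply: contraNneq nonconst_b => ->.
rewrite /nonconstant_blocks -(subnKC J_ge) iotaD count_cat; apply: leq_trans (leq_addr _ _).
rewrite (@eq_in_count _ _ predT) ?count_predT ?size_iota // => j; rewrite mem_iota => j_lt.
by rewrite /= block_flatten //; apply: (all_nthP [::] nonconst).
Qed.

(** * Flexible schedules *)

Definition pass (t : nat) : seq op := flatten (nseq t [:: Store 0; Retrieve 0]).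

Definition park (p q : nat) : seq op := pass p ++ Store 1 :: pass q ++ [:: Retrieve 1].

Lemma run_pass L W t c u ls d : 0 < L -> 0 < W -> 0 < size ls -> nth [::] ls 0 = [::] ->
  run L W (pass t) (mkState (nseq t c ++ u) ls d) = Some (mkState u ls (d ++ nseq t c)).
Proof.
move=> L_gt0 W_gt0 ls_gt0 ls_0.
have reset_0 : set_nth [::] ls 0 [::] = ls by case: ls ls_gt0 ls_0 => // l ls _ /= ->.
elim: t d => [|t IH] d; first by rewrite cats0.
rewrite /= ls_0 L_gt0 W_gt0 /= nth_set_nth /= set_set_nth eqxx reset_0.
by rewrite IH -cats1 -catA.
Qed.

Lemma run_park L W p q x y u d : 1 < L -> 0 < W ->
  run L W (park p q) (mkState (nseq p x ++ y :: nseq q x ++ u) (nseq L [::]) d) =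
  Some (mkState u (nseq L [::]) (d ++ nseq (p + q) x ++ [:: y])).
Proof.
move=> L_gt1 W_gt0; have L_gt0 := ltnW L_gt1.
have empty_lane i : nth [::] (nseq L [::]) i = [::] :> seq nat by rewrite nth_nseq if_same.
have size_L : 0 < size (nseq L ([::] : seq nat)) by rewrite size_nseq.
rewrite /park run_cat run_pass //= empty_lane L_gt1 W_gt0 /=.
rewrite run_cat run_pass ?size_set_nth ?nth_set_nth //=; last by rewrite leq_max size_L orbT.
rewrite L_gt1 nth_set_nth /= set_set_nth eqxx.
have -> : set_nth [::] (nseq L [::]) 1 [::] = nseq L ([::] : seq nat).
  by case: L L_gt1 {L_gt0 size_L empty_lane} => [|[|L]].
by rewrite nseqD -cats1 -!catA.
Qed.

Lemma run_flatten_nseq L W ops (p q : seq nat) :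
  (forall u d, run L W ops (mkState (p ++ u) (nseq L [::]) d) =
               Some (mkState u (nseq L [::]) (d ++ q))) ->
  forall n d, run L W (flatten (nseq n ops)) (mkState (flatten (nseq n p)) (nseq L [::]) d) =
              Some (mkState [::] (nseq L [::]) (d ++ flatten (nseq n q))).
Proof.
move=> run_ops n; rewrite -[flatten (nseq n p)]cats0; elim: n => [|n IH] d /=.
  by rewrite cats0.
by rewrite run_cat -catA run_ops IH catA.
Qed.

(** * The hard instance *)

Definition hard_blocks (a : nat) : seq (seq nat) :=
  [:: rcons (nseq a 1) 2; 1 :: nseq a 2; rcons (nseq a 2) 1; 2 :: nseq a 1].

Lemma hard_blocks_size a : all (fun b => size b == a.+1) (hard_blocks a).
Proof. by rewrite /= !size_rcons !size_nseq eqxx. Qed.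

Lemma hard_blocks_nonconstant a : 0 < a -> all (fun b => ~~ constant b) (hard_blocks a).
Proof. by case: a => // a _; rewrite /= !all_rcons. Qed.

Definition flex_ops (a : nat) : seq op := park a 1 ++ park (a + a) 1 ++ pass a.

Definition flex_period (a : nat) : seq nat :=
  nseq a.+1 1 ++ nseq (a + a).+2 2 ++ nseq a.+1 1.

Lemma run_flex_ops L W a u d : 1 < L -> 0 < W ->
  run L W (flex_ops a) (mkState (flatten (hard_blocks a) ++ u) (nseq L [::]) d) =
  Some (mkState u (nseq L [::]) (d ++ flex_period a)).
Proof.
move=> L_gt1 W_gt0; have L_gt0 := ltnW L_gt1.
have -> : flatten (hard_blocks a) ++ u =
    nseq a 1 ++ 2 :: nseq 1 1 ++ (nseq (a + a) 2 ++ 1 :: nseq 1 2 ++ (nseq a 1 ++ u)).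
  by rewrite /= nseqD -!cats1 -!catA /= cats0 -!catA.
rewrite /flex_ops run_cat run_park // run_cat run_park // run_pass ?nth_nseq ?if_same ?size_nseq //.
by rewrite /flex_period -!catA !addn1.
Qed.

Lemma flex_solution_hard_blocks L W a n : 1 < L -> 0 < W ->
  flex_solution L W (flatten (flatten (nseq n (hard_blocks a))))
                    (flatten (nseq n (flex_period a))).
Proof.
move=> L_gt1 W_gt0; exists (flatten (nseq n (flex_ops a))).
exists (mkState [::] (nseq L [::]) ([::] ++ flatten (nseq n (flex_period a)))).
rewrite flatten_flatten_nseq (run_flatten_nseq (fun u d => run_flex_ops a u d L_gt1 W_gt0)).
by split => //; rewrite /finished /buffer_empty /= all_nseq orbT.
Qed.

Lemma color_changes_flex_period a : color_changes (flex_period a) = 2.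
Proof.
rewrite /flex_period /= color_changes_cons_nseq !color_changes_cons2 color_changes_cons_nseq.
by rewrite color_changes_cons2 -[nseq a 1]cats0 color_changes_cons_nseq.
Qed.

Lemma color_changes_flex_output a n :
  color_changes (flatten (nseq n (flex_period a))) = n * 2.
Proof.
rewrite color_changes_flatten_nseq ?color_changes_flex_period //.
by rewrite /flex_period !last_cat last_nseq.
Qed.

Theorem theorem1 (L C W : nat) (hL : 1 < L) (hC : 1 < C) (hW : 1 < W) :
  forall n : nat, exists cs : seq nat,
    all (fun c => (1 <= c <= C)%N) cs /\
    exists kflex kstr : nat,
      is_min_changes (flex_solution L W cs) kflex /\
      is_min_changes (str_solution L W cs) kstr /\
      kflex + n <= kstr.
Proof.
move=> n; have L_gt0 := ltnW hL; have W_gt0 := ltnW hW.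
set a := (L * W).-1.
have m_eq : L * W = a.+1 by rewrite /a prednK // muln_gt0 L_gt0 W_gt0.
have a_gt0 : 0 < a by have := leq_mul hL hW; rewrite m_eq; lia.
set bs := flatten (nseq n (hard_blocks a)).
exists (flatten bs); split.
  rewrite flatten_flatten_nseq; apply: all_flatten_nseq.
  apply/allP => c; rewrite /= !(mem_cat, mem_rcons, inE, mem_nseq, in_nil) => c_12; lia.
have flex_sol := flex_solution_hard_blocks a n hL W_gt0.
have [kflex min_flex] := is_min_changes_exists flex_sol.
have [out str_out] := str_solution_exists (flatten bs) L_gt0 W_gt0.
have [kstr min_str] := is_min_changes_exists str_out.
exists kflex, kstr; do 2!split => //.
have kflex_le : kflex <= n * 2.
  by rewrite -(color_changes_flex_output a n); apply: min_flex.2.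
have kstr_ge : size bs <= kstr.
  case: min_str => [[out' [str_out' <-]] _]; apply: str_color_changes_ge str_out'.
    by rewrite m_eq; apply: all_flatten_nseq; apply: hard_blocks_size.
  by apply: all_flatten_nseq; apply: hard_blocks_nonconstant.
by move: kstr_ge; rewrite size_flatten_nseq /=; lia.
Qed.
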